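(* Consider the following water-filling process. Set $\pi^1=0\in\mathbb{R}^N$ and $W^1_a=W$. While $W^t_a\neq\emptyset$: let $$\Delta\pi^t=\min_{S\subseteq N,\ W^t_a\not\subseteq S}\ \frac{w(N)-w(S)-\sum_{i\in N\setminus S}\pi^t_i}{|W^t_a\setminus S|},$$ let $S^*$ be any coalition attaining this minimum, set $W^t_f=W^t_a\setminus S^*$, define $\pi^{t+1}_i=\pi^t_i+\Delta\pi^t$ for $i\in W^t_a$ and $\pi^{t+1}_i=\pi^t_i$ otherwise, set $W^{t+1}_a=W^t_a\setminus W^t_f$, and increase $t$ by one. Then this process terminates after at most $|W|$ iterations, and the final vector $\pi^T$ (where $W^T_a=\emptyset$) is the BLO outcome.
   Context: A combinatorial auction (CA) has a finite set of bidders $N=\{1,\dots,n\}$, a finite set of items $M$, and for each bidder $i$ a valuation $v_i:2^M\to\mathbb{R}_{\ge 0}$ with $v_i(\emptyset)=0$. For $S\subseteq N$ let $w(S)=\max\{\sum_{i\in S}v_i(a_i): a_i\subseteq M,\ a_i\cap a_j=\emptyset\ (i\ne j)\}$ (with $w(\emptyset)=0$). Fix an allocation $(a^*_i)_{i\in N}$ attaining $w(N)$; the winner set is $W=\{i: a^*_i\neq\emptyset\}$. The core is $U=\{\pi\in\mathbb{R}^N:\ \pi_i\ge 0\ \forall i\in N,\ \sum_{i\in N\setminus S}\pi_i\le w(N)-w(S)\ \forall S\subseteq N\}$. (Equivalently, $\Delta\pi^t$ above is the largest $\Delta$ such that increasing the utility of every bidder in $W^t_a$ by $\Delta$, keeping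 the others fixed, stays in $U$.) For $x,y\in\mathbb{R}^n$, $x$ leximin-dominates $y$ if, writing $x_{(1)}\le\dots\le x_{(n)}$ and $y_{(1)}\le\dots\le y_{(n)}$ for the sorted entries, there is $0\le k\le n-1$ with $x_{(j)}=y_{(j)}$ for $j\le k$ and $x_{(k+1)}>y_{(k+1)}$. The BLO outcome is the (unique) $\pi\in U$ not leximin-dominated by any $\pi'\in U$. *)

From mathcomp Require Import all_boot all_order all_algebra.
Set Implicit Arguments. Unset Strict Implicit. Unset Printing Implicit Defensive.
Import Order.TTheory GRing.Theory Num.Theory.
Local Open Scope ring_scope.

Section CA.
Variables (R : realFieldType) (n : nat) (M : finType).
Variable v : 'I_n -> {set M} -> R.

Definition feasible (a : {ffun 'I_n -> {set M}}) : bool :=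
  [forall i, forall j, (i != j) ==> [disjoint a i & a j]].

(* w(S) = max over feasible allocations of the welfare of S (values are
   nonnegative and the empty allocation is feasible, so seeding with 0 is harmless) *)
Definition welfare (S : {set 'I_n}) : R :=
  \big[Num.max/0]_(a : {ffun 'I_n -> {set M}} | feasible a) \sum_(i in S) v i (a i).

Definition in_core (p : {ffun 'I_n -> R}) : Prop :=
  (forall i, 0 <= p i) /\
  (forall S : {set 'I_n}, \sum_(i in ~: S) p i <= welfare setT - welfare S).

Definition sorted_entries (x : {ffun 'I_n -> R}) : seq R :=
  sort <=%R (fgraph x).

Definition leximin_dom (x y : {ffun 'I_n -> R}) : Prop :=
  exists k : nat, (k < n)%N /\
    (forall j, (j < k)%N -> nth 0 (sorted_entries x) j = nth 0 (sorted_entries y) j) /\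
    nth 0 (sorted_entries y) k < nth 0 (sorted_entries x) k.

Definition is_BLO (p : {ffun 'I_n -> R}) : Prop :=
  in_core p /\ forall p', in_core p' -> ~ leximin_dom p' p.

Definition wf_ratio (p : {ffun 'I_n -> R}) (A S : {set 'I_n}) : R :=
  (welfare setT - welfare S - \sum_(i in ~: S) p i) / (#|A :\: S|)%:R.

Definition wf_step (p : {ffun 'I_n -> R}) (A : {set 'I_n})
    (p' : {ffun 'I_n -> R}) (A' : {set 'I_n}) : Prop :=
  exists Sstar : {set 'I_n},
    ~~ (A \subset Sstar) /\
    (forall S : {set 'I_n}, ~~ (A \subset S) -> wf_ratio p A Sstar <= wf_ratio p A S) /\
    let Delta := wf_ratio p A Sstar in
    let Wf := A :\: Sstar in
    (forall i, p' i = if i \in A then p i + Delta else p i) /\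
    A' = A :\: Wf.

(* a run of the process: state at time t (0-indexed, t = 0 is the paper's t = 1) *)
Definition wf_run (W : {set 'I_n}) (pi : nat -> {ffun 'I_n -> R})
    (Wa : nat -> {set 'I_n}) : Prop :=
  pi 0%N = [ffun => 0] /\ Wa 0%N = W /\
  forall t, Wa t != set0 -> wf_step (pi t) (Wa t) (pi t.+1) (Wa t.+1).

End CA.

(** Along the run the following invariant holds: the current payoff vector lies in
    the core, all still-active bidders share the current maximal payoff, and every
    inactive bidder is either a loser (payoff 0) or was frozen by a coalition S that
    contains every active bidder, is tight (the bidders outside S collect exactly
    w(N) - w(S)) and leaves nobody outside S with a higher payoff.  Each step
    removes the nonempty set A \ S* from the active set, so the process stops
    within |W| steps.  At the end every bidder is a loser or frozen.  A core vector
    cannot raise a loser above 0, and by tightness it can raise a frozen bidder i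
    only by lowering some j outside its coalition, whose payoff is at most that of
    i.  That exchange property rules out leximin domination. *)

From mathcomp Require Import all_boot all_order all_algebra zify.
Import Order.TTheory GRing.Theory Num.Theory.
Set Implicit Arguments. Unset Strict Implicit. Unset Printing Implicit Defensive.
Local Open Scope ring_scope.

Lemma sub_count_lt (T : eqType) (a b : pred T) (s : seq T) :
  (forall x, a x -> b x) -> (exists2 x, x \in s & b x && ~~ a x) ->
  (count a s < count b s)%N.
Proof.
move=> sub_ab [x]; elim: s => // y s IH; rewrite inE => /orP [/eqP -> | xs] hx /=.
  case/andP: hx => -> /negbTE ->; rewrite add0n add1n ltnS.
  exact: sub_count.
have := IH xs hx.
by case: (a y) (b y) (sub_ab y) => [] [] //= h; lia.
Qed.

Lemma card_proper_chain (T : finType) (A : nat -> {set T}) :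
  (forall t, A t != set0 -> A t.+1 \proper A t) ->
  exists k, [/\ (k <= #|A 0%N|)%N, A k = set0 & forall t, (t < k)%N -> A t != set0].
Proof.
move=> shrink.
have card_le t : (forall s, (s < t)%N -> A s != set0) -> (#|A t| + t <= #|A 0%N|)%N.
  elim: t => [|t IH] ne; first by rewrite addn0.
  have := proper_card (shrink t (ne t (ltnSn t))).
  have := IH (fun s hs => ne s (ltnW hs)); lia.
have [t0 /eqP At0] : exists t, A t == set0.
  have [/existsP [t At0] | /existsPn ne] :=
    boolP [exists t : 'I_(#|A 0%N|.+1), A t == set0]; first by exists t.
  have := card_le #|A 0%N| (fun s hs => ne (@Ordinal #|A 0%N|.+1 s (ltnW hs))).
  move: (ne ord_max); rewrite -cards_eq0 /=; lia.
have [k /eqP Ak0 k_min] := ex_minnP (ex_intro (fun t => A t == set0) t0 (introT eqP At0)).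
have ne t : (t < k)%N -> A t != set0.
  by move=> ltk; apply/negP => /k_min; rewrite leqNgt ltk.
by exists k; split => //; have := card_le k ne; lia.
Qed.

Section Leximin.
Variables (R : realFieldType) (n : nat).
Implicit Types x y : {ffun 'I_n -> R}.

Definition num_le x (z : R) : nat := count (fun a => a <= z) (sorted_entries x).

Lemma num_leE x z : num_le x z = count (fun i => x i <= z) (enum 'I_n).
Proof.
rewrite /num_le /sorted_entries ((permP (permEl (perm_sort _ _))) (fun a => a <= z)).
by rewrite -codom_ffun codomE count_map.
Qed.

Lemma size_sorted_entries x : size (sorted_entries x) = n.
Proof. by rewrite /sorted_entries size_sort size_tuple card_ord. Qed.

(* [c] is the k-th smallest entry of [x], for the first position k where [y] wins. *)
Lemma leximin_dom_num_le x y : leximin_dom y x ->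
  exists c, (num_le y c < num_le x c)%N /\
            forall z, z < c -> (num_le y z <= num_le x z)%N.
Proof.
move=> [k [ltkn [eq_prefix lt_k]]].
rewrite /num_le; set s := sorted_entries x in eq_prefix lt_k *.
set s' := sorted_entries y in eq_prefix lt_k *.
have ss : sorted <=%O s by exact: sort_le_sorted.
have ss' : sorted <=%O s' by exact: sort_le_sorted.
have size_s : size s = n by exact: size_sorted_entries.
exists (nth 0 s k); split.
  have cnt_y : (count (fun a : R => (a <= nth 0 s k)%R) s' <= k)%N.
    rewrite leqNgt; apply/negP => /(nth_count_le 0 ss') le_k.
    by move: (lt_le_trans lt_k le_k); rewrite ltxx.
  have cnt_x : (k < count (fun a : R => (a <= nth 0 s k)%R) s)%N.
    rewrite ltnNge; apply/negP => le_cnt.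
    have := nth_count_gt 0 ss (i := k) (x := nth 0 s k).
    by rewrite le_cnt size_s ltkn ltxx => /(_ isT).
  exact: leq_ltn_trans cnt_y cnt_x.
move=> z ltzc; set m := count _ s; set m' := count _ s'.
rewrite leqNgt; apply/negP => lt_mm'.
have lt_mk : (m < k)%N.
  rewrite ltnNge; apply/negP => le_km.
  have := nth_count_le 0 ss' (leq_ltn_trans le_km lt_mm').
  by move/(lt_le_trans (lt_trans ltzc lt_k)); rewrite ltxx.
have y_m := nth_count_le 0 ss' lt_mm'.
have x_m := nth_count_gt 0 ss (i := m) (x := z).
rewrite leqnn size_s (ltn_trans lt_mk ltkn) /= in x_m.
rewrite (eq_prefix _ lt_mk) in y_m.
by move: (lt_le_trans (x_m isT) y_m); rewrite ltxx.
Qed.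

(* With [j0] minimising [x] among the entries that [y] lowers, no entry below [x j0]
   moves down, while at level [y j0] one more entry of [y] lies below it. *)
Lemma not_leximin_dom x y :
  (forall i, x i < y i -> exists j, x j <= x i /\ y j < x j) -> ~ leximin_dom y x.
Proof.
move=> exchange /leximin_dom_num_le [c [lt_c le_below]].
have [/existsP [j1 lt_j1] | /existsPn no_loss] := boolP [exists j, y j < x j]; last first.
  have eq_yx : y = x.
    apply/ffunP => i; have := no_loss i; case: ltgtP => // lt_i _.
    by have [j [_ lt_j]] := exchange i lt_i; move: (no_loss j); rewrite lt_j.
  by move: lt_c; rewrite eq_yx ltnn.
have [j0 lt_j0 j0_min] := arg_minP (P := fun j => y j < x j) (fun j => x j) lt_j1.
have changed_above i : y i != x i -> x j0 <= x i.
  move=> ne_i; case: (ltgtP (y i) (x i)) => [lt_i|lt_i|eq_i]; first exact: j0_min.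
    have [j [le_j lt_j]] := exchange i lt_i.
    exact: le_trans (j0_min _ lt_j) le_j.
  by rewrite eq_i eqxx in ne_i.
have le_x_le_y z i : z < x j0 -> x i <= z -> y i <= z.
  move=> lt_z le_i; case: (eqVneq (y i) (x i)) => [-> //|/changed_above le_j0].
  by move: (le_lt_trans (le_trans le_j0 le_i) lt_z); rewrite ltxx.
have [lt_cx | le_xc] := ltP c (x j0).
  have : (num_le x c <= num_le y c)%N.
    by rewrite !num_leE; apply: sub_count => i /=; exact: le_x_le_y.
  by move/(leq_ltn_trans)/(_ lt_c); rewrite ltnn.
have : (num_le x (y j0) < num_le y (y j0))%N.
  rewrite !num_leE; apply: sub_count_lt => [i|]; first exact: le_x_le_y.
  by exists j0; rewrite ?mem_enum // lexx /= -ltNge.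
have := le_below (y j0) (lt_le_trans lt_j0 le_xc).
by move=> le_y /(leq_ltn_trans le_y); rewrite ltnn.
Qed.

End Leximin.

Lemma sum_lt_exists (R : realDomainType) (I : finType) (P : pred I) (x y : I -> R) i :
  \sum_(j in P) y j <= \sum_(j in P) x j -> i \in P -> x i < y i ->
  exists2 j, j \in P & y j < x j.
Proof.
move=> le_sum Pi lt_i.
have [/exists_inP [j Pj lt_j] | /exists_inPn ge_all] := boolP [exists j in P, y j < x j].
  by exists j.
suff : \sum_(j in P) x j < \sum_(j in P) y j by rewrite ltNge le_sum.
rewrite (bigD1 i Pi) [X in _ < X](bigD1 i Pi) /=.
apply: ltr_leD => //; apply: ler_sum => j /andP [Pj _].
by rewrite leNgt; apply: ge_all.
Qed.

Lemma sum_raise_on (R : numDomainType) (I : finType) (p p' : I -> R) (A S : {set I}) (d : R) :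
  (forall i, p' i = if i \in A then p i + d else p i) ->
  \sum_(i in ~: S) p' i = \sum_(i in ~: S) p i + #|A :\: S|%:R * d.
Proof.
move=> def_p'.
rewrite (eq_bigr (fun i => p i + (if i \in A then d else 0))); last first.
  by move=> i _; rewrite def_p'; case: (i \in A); rewrite ?addr0.
rewrite big_split /=; congr (_ + _).
rewrite -big_mkcondr /= (eq_bigl (fun i => i \in A :\: S)); last first.
  by move=> i; rewrite !inE andbC.
by rewrite sumr_const mulr_natl.
Qed.

Section Auction.
Variables (R : realFieldType) (n : nat) (M : finType) (v : 'I_n -> {set M} -> R).
Implicit Types (p : {ffun 'I_n -> R}) (A S T : {set 'I_n}).

Lemma welfare_le_setT S : (forall i B, 0 <= v i B) -> welfare v S <= welfare v setT.
Proof.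
move=> v_ge0; rewrite {1}/welfare; apply: bigmax_le.
  apply: (big_ind (fun y => 0 <= y)) => // [a b a_ge0 b_ge0 | a _].
    by rewrite le_max a_ge0.
  by apply: sumr_ge0 => i _.
move=> a feas_a; apply: le_trans (le_bigmax_cond 0 _ feas_a).
rewrite big_mkcond /= [leRHS]big_mkcond /=; apply: ler_sum => i _.
by rewrite in_setT; case: (i \in S).
Qed.

Lemma core_unassigned_le0 (astar : {ffun 'I_n -> {set M}}) p i :
  (forall j, v j set0 = 0) -> feasible astar ->
  \sum_(j in [set: 'I_n]) v j (astar j) = welfare v setT ->
  in_core v p -> astar i = set0 -> p i <= 0.
Proof.
move=> v_set0 feas_astar opt_astar [_ /(_ (setT :\ i))] + astar_i.
have -> : ~: (setT :\ i) = [set i] by apply/setP => j; rewrite !inE andbT negbK.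
rewrite big_set1 => /le_trans; apply; rewrite subr_le0 -opt_astar.
rewrite (bigD1 i) ?in_setT //= astar_i v_set0 add0r.
rewrite (eq_bigl (fun j => j \in setT :\ i)); last by move=> j; rewrite !inE andbT.
exact: (le_bigmax_cond _ (fun a : {ffun 'I_n -> {set M}} => \sum_(j in setT :\ i) v j (a j))
          feas_astar).
Qed.

Definition tight p S : Prop := \sum_(j in ~: S) p j = welfare v setT - welfare v S.

Definition frozen p A i : Prop :=
  exists S, [/\ i \notin S, A \subset S, tight p S & forall j, j \notin S -> p j <= p i].

Definition wf_invariant (W A : {set 'I_n}) p : Prop :=
  [/\ in_core v p,
      exists L, (forall i, i \in A -> p i = L) /\ (forall j, p j <= L) &
      forall i, i \notin A -> (i \notin W /\ p i = 0) \/ frozen p A i].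

Lemma wf_invariant0 W : (forall i B, 0 <= v i B) -> wf_invariant W W [ffun => 0].
Proof.
move=> v_ge0; split.
- split=> [i|S]; first by rewrite ffunE.
  rewrite big1 => [|i _]; last by rewrite ffunE.
  by rewrite subr_ge0 welfare_le_setT.
- by exists 0; split=> [i _|j]; rewrite ffunE.
- by move=> i iW; left; rewrite ffunE.
Qed.

Lemma wf_ratio_ge0 p A S : in_core v p -> 0 <= wf_ratio v p A S.
Proof. by case=> _ core_p; rewrite divr_ge0 ?ler0n ?subr_ge0 ?core_p. Qed.

Lemma mulr_card_wf_ratio p A S : ~~ (A \subset S) ->
  #|A :\: S|%:R * wf_ratio v p A S =
  welfare v setT - welfare v S - \sum_(i in ~: S) p i.
Proof. by rewrite -setD_eq0 -card_gt0 => ?; rewrite mulrC divfK // pnatr_eq0 -lt0n. Qed.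

Lemma core_exchange p p' S i : tight p S -> in_core v p' -> i \notin S -> p i < p' i ->
  exists2 j, j \notin S & p' j < p j.
Proof.
move=> tight_S [_ /(_ S)]; rewrite -tight_S => le_sum iS lt_i.
have iS' : i \in ~: S by rewrite inE.
by have [j] := sum_lt_exists le_sum iS' lt_i; rewrite inE; exists j.
Qed.

Section Step.
Variables (p p' : {ffun 'I_n -> R}) (A S : {set 'I_n}).
Hypothesis A_notsub_S : ~~ (A \subset S).
Hypothesis S_min : forall T, ~~ (A \subset T) -> wf_ratio v p A S <= wf_ratio v p A T.
Hypothesis def_p' : forall i, p' i = if i \in A then p i + wf_ratio v p A S else p i.

Lemma step_sum_out T : A \subset T -> \sum_(i in ~: T) p' i = \sum_(i in ~: T) p i.
Proof.
by rewrite -setD_eq0 (sum_raise_on _ def_p') => /eqP ->; rewrite cards0 mul0r addr0.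
Qed.

Lemma step_core : in_core v p -> in_core v p'.
Proof.
move=> core_p; have [p_ge0 core_sum] := core_p; split.
  by move=> i; rewrite def_p'; case: ifP => _; rewrite ?addr_ge0 ?wf_ratio_ge0 ?p_ge0.
move=> T; have [AT | A_notsub_T] := boolP (A \subset T).
  by rewrite step_sum_out ?core_sum.
have card_pos : 0 < #|A :\: T|%:R :> R by rewrite ltr0n card_gt0 setD_eq0.
rewrite (sum_raise_on _ def_p') -lerBrDl -(mulr_card_wf_ratio p A_notsub_T).
by rewrite ler_pM2l // S_min.
Qed.

Lemma step_tight : tight p' S.
Proof. by rewrite /tight (sum_raise_on _ def_p') mulr_card_wf_ratio // addrC subrK. Qed.

Lemma step_frozen_inactive i : i \notin A -> frozen p A i -> frozen p' (A :&: S) i.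
Proof.
move=> iNA [T [iT AT tight_T le_i]]; exists T; split=> //.
- exact: subset_trans (subsetIl A S) AT.
- by rewrite /tight step_sum_out // tight_T.
- move=> j jT; have jNA : j \notin A by apply: contra jT; exact: subsetP.
  by rewrite !def_p' (negbTE iNA) (negbTE jNA) le_i.
Qed.

Lemma step_invariant W : wf_invariant W A p -> wf_invariant W (A :&: S) p'.
Proof.
move=> [core_p [L [level_A le_L]] inactive].
have d_ge0 := wf_ratio_ge0 A S core_p.
have le_Ld j : p' j <= L + wf_ratio v p A S.
  by rewrite def_p'; case: ifP => [/level_A -> // | _]; rewrite ler_wpDr.
split; first exact: step_core.
  exists (L + wf_ratio v p A S); split=> // i; rewrite inE => /andP [iA _].
  by rewrite def_p' iA level_A.
move=> i; have [iA | iNA] := boolP (i \in A).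
  rewrite inE iA /= => iS; right; exists S; split=> //; first exact: subsetIr.
    exact: step_tight.
  by move=> j _; rewrite [p' i]def_p' iA level_A.
move=> _; case: (inactive i iNA) => [[iW p_i0] | frozen_i]; last first.
  by right; exact: step_frozen_inactive.
by left; rewrite def_p' (negbTE iNA).
Qed.
End Step.

Lemma wf_step_proper p A p' A' : wf_step v p A p' A' -> A' \proper A.
Proof.
move=> [S [/subsetPn [i iA iS] [_ [_ ->]]]].
rewrite setDDr setDv set0U; apply/properP; split; first exact: subsetIl.
by exists i; rewrite // inE (negbTE iS) andbF.
Qed.

Lemma wf_step_invariant W p A p' A' :
  wf_step v p A p' A' -> wf_invariant W A p -> wf_invariant W A' p'.
Proof.
move=> [S [A_notsub_S [S_min [def_p' ->]]]].
by rewrite setDDr setDv set0U; exact: step_invariant.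
Qed.

Lemma wf_invariant_BLO (astar : {ffun 'I_n -> {set M}}) p :
  (forall j, v j set0 = 0) -> feasible astar ->
  \sum_(j in [set: 'I_n]) v j (astar j) = welfare v setT ->
  wf_invariant [set i | astar i != set0] set0 p -> is_BLO v p.
Proof.
move=> v_set0 feas_astar opt_astar [core_p _ inactive]; split=> // p' core_p'.
apply: not_leximin_dom => i lt_i.
case: (inactive i (negbT (in_set0 i))) => [[iW p_i0] | [S [iS _ tight_S le_i]]].
  move: iW; rewrite inE negbK => /eqP astar_i.
  have := core_unassigned_le0 v_set0 feas_astar opt_astar core_p' astar_i.
  by rewrite p_i0 in lt_i => /(lt_le_trans lt_i); rewrite ltxx.
have [j jS lt_j] := core_exchange tight_S core_p' iS lt_i.
by exists j; split=> //; exact: le_i.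
Qed.

End Auction.

Theorem lemma2 (R : realFieldType) (n : nat) (M : finType)
    (v : 'I_n -> {set M} -> R)
    (v_nonneg : forall i A, 0 <= v i A)
    (v_empty : forall i, v i set0 = 0)
    (astar : {ffun 'I_n -> {set M}})
    (astar_feas : feasible astar)
    (astar_opt : \sum_(i in [set: 'I_n]) v i (astar i) = welfare v [set: 'I_n])
    (pi : nat -> {ffun 'I_n -> R}) (Wa : nat -> {set 'I_n})
    (run : wf_run v [set i | astar i != set0] pi Wa) :
  exists T : nat,
    (T <= #|[set i | astar i != set0]|)%N /\
    Wa T = set0 /\
    (forall t, (t < T)%N -> Wa t != set0) /\
    is_BLO v (pi T).
Proof.
set W := [set i | astar i != set0] in run *.
have [pi0 [Wa0 step]] := run.
have [T [le_T WaT ne_before]] :=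
  card_proper_chain (fun t ne => wf_step_proper (step t ne)).
exists T; split; first by rewrite -Wa0.
do 2!split=> //.
apply: (wf_invariant_BLO v_empty astar_feas astar_opt); rewrite -WaT.
suff invariant t : (t <= T)%N -> wf_invariant v W (Wa t) (pi t) by exact: invariant.
elim: t => [_ | t IH lt_tT]; first by rewrite pi0 Wa0; exact: wf_invariant0.
exact: wf_step_invariant (step t (ne_before t lt_tT)) (IH (ltnW lt_tT)).
Qed.
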